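(* Let $k\ge 0$ be an integer and let $G$ be a finite graph (parallel edges allowed, no loops). Let $u_0\in V(G)$ and let $u_1,u_2$ be two distinct neighbors of $u_0$. Let $H$ be the graph obtained from $G$ by deleting all edges with one end $u_0$ and the other end $u_1$ or $u_2$, and let $\kappa$ be a $k$-edge-coloring of $H$. For $i=1,2$ let $m_i$ be the number of edges of $G$ with ends $u_0$ and $u_i$, and for $i=0,1,2$ let $S_i$ be the set of colors $\kappa(f)$ over all edges $f$ of $H$ incident with $u_i$. If $m_1+|S_0\cup S_1|\le k$, $m_2+|S_0\cup S_2|\le k$ and $m_1+m_2+|S_0\cup(S_1\cap S_2)|\le k$, then $\kappa$ can be extended to a $k$-edge-coloring of $G$.
   Context: A $k$-edge-coloring of a graph is a map $\kappa:E\to\{1,\dots,k\}$ such that $\kappa(e)\neq\kappa(f)$ for any two distinct edges $e,f$ sharing at least one end (parallel edges sharing both ends must receive different colors). *)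

(* A finite multigraph (parallel edges allowed, no loops) is
   given by finite types V (vertices), E (edges) and two end maps
   src tgt : E -> V with src e != tgt e for all e. *)
From mathcomp Require Import all_boot.
Set Implicit Arguments. Unset Strict Implicit. Unset Printing Implicit Defensive.

Section Multigraph.
Variables (V E : finType) (src tgt : E -> V).

Definition incident (e : E) (v : V) : bool := (src e == v) || (tgt e == v).

Definition joins (e : E) (a b : V) : bool :=
  ((src e == a) && (tgt e == b)) || ((src e == b) && (tgt e == a)).

Definition share_end (e f : E) : bool :=
  [exists v, incident e v && incident f v].

Definition proper_coloring_on (k : nat) (D : {set E}) (c : E -> 'I_k) : Prop :=
  forall e f, e \in D -> f \in D -> e != f -> share_end e f -> c e != c f.

Definition colors_at (k : nat) (D : {set E}) (c : E -> 'I_k) (v : V) : {set 'I_k} :=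
  [set c f | f in [set f in D | incident f v]].

Definition mult (a b : V) : nat := #|[set e | joins e a b]|.

End Multigraph.

From mathcomp Require Import all_boot zify.

(* The colors usable on the u0u1 edges form F1 = ~: (S0 :|: S1), those usable on
   the u0u2 edges F2 = ~: (S0 :|: S2), and F1 :|: F2 = ~: (S0 :|: (S1 :&: S2)).
   The three hypotheses are thus Hall's condition for choosing disjoint sets of
   m1 colors in F1 and m2 colors in F2: give the u0u1 edges all of F1 :\: F2,
   topped up from F1 :&: F2, and the u0u2 edges what remains of F2.  Coloring each
   bundle injectively from its set gives a proper extension, because an edge of H
   meeting a u0ui edge is incident with u0 or ui. *)

Set Implicit Arguments. Unset Strict Implicit. Unset Printing Implicit Defensive.

Section FinsetCounting.
Variable T : finType.
Implicit Types (A Z : {set T}).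

Lemma subset_of_card A n : n <= #|A| -> exists2 W : {set T}, W \subset A & #|W| = n.
Proof.
case/card_geqP=> s [uniq_s size_s sA]; exists [set x in s].
  by apply/subsetP=> x; rewrite inE => /sA.
by rewrite cardsE (card_uniqP uniq_s).
Qed.

(* [d] only supplies the default value of [nth]. *)
Lemma exists_inj_into (I : finType) (A : {set I}) Z (d : I -> T) :
  #|A| <= #|Z| ->
  exists f : I -> T, {in A &, injective f} /\ {in A, forall i, f i \in Z}.
Proof.
case/card_geqP=> s [uniq_s size_s sZ].
have lt_s i : i \in A -> index i (enum A) < size s.
  by rewrite size_s cardE index_mem mem_enum.
exists (fun i => nth (d i) s (index i (enum A))); split=> [i j iA jA /eqP|i iA].
  rewrite (set_nth_default (d i) (d j)) ?lt_s // nth_uniq ?lt_s // => /eqP.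
  by apply: (index_inj i); rewrite mem_enum.
exact/sZ/mem_nth/lt_s.
Qed.

Lemma glue_inj_in (I : finType) (J1 J2 : {set I}) (Z1 Z2 : {set T}) (c1 c2 : I -> T) :
  {in J1 &, injective c1} -> {in J2 &, injective c2} ->
  {in J1, forall i, c1 i \in Z1} -> {in J2, forall i, c2 i \in Z2} ->
  [disjoint Z1 & Z2] ->
  {in J1 :|: J2 &, injective (fun i => if i \in J1 then c1 i else c2 i)}.
Proof.
move=> inj1 inj2 Zc1 Zc2 dZ i j; rewrite !inE.
case iJ1: (i \in J1); case jJ1: (j \in J1) => //= iJ jJ.
- exact: inj1.
- by move=> eq_c; move: (Zc2 j jJ); rewrite -eq_c (disjointFr dZ (Zc1 i iJ1)).
- by move=> eq_c; move: (Zc2 i iJ); rewrite eq_c (disjointFr dZ (Zc1 j jJ1)).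
- exact: inj2.
Qed.

Lemma disjoint_subsets_of_card (F1 F2 : {set T}) m1 m2 :
  m1 <= #|F1| -> m2 <= #|F2| -> m1 + m2 <= #|F1 :|: F2| ->
  exists Z1 Z2 : {set T},
    [/\ Z1 \subset F1, Z2 \subset F2, [disjoint Z1 & Z2],
        m1 <= #|Z1| & m2 <= #|Z2|].
Proof.
move=> le_m1 le_m2 le_m12.
have [|W sW cardW] := @subset_of_card (F1 :&: F2) (m1 - #|F1 :\: F2|).
  by have := cardsID F2 F1; lia.
have [sWF1 sWF2] : W \subset F1 /\ W \subset F2.
  by split; apply: subset_trans sW _; rewrite (subsetIl, subsetIr).
have dis : [disjoint F1 :\: F2 & W].
  by rewrite disjoint_sym disjoints_subset setCD subsetU // sWF2 orbT.
exists ((F1 :\: F2) :|: W), (F2 :\: W); split.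
- by rewrite subUset subsetDl sWF1.
- exact: subsetDl.
- rewrite disjoints_subset setCD subUset subsetUr andbT.
  by apply/subsetP=> x; rewrite !inE => /andP[/negbTE-> _].
- by rewrite cardsU (disjoint_setI0 dis) cards0; lia.
- rewrite cardsDS // cardW; have := cardsU F1 F2; have := cardsID F2 F1; lia.
Qed.

End FinsetCounting.

Section Multigraph.
Variables (V E : finType) (src tgt : E -> V) (k : nat).
Implicit Types (D : {set E}) (c : E -> 'I_k).

Definition bundle (a b : V) : {set E} := [set e | joins src tgt e a b].
Lemma mem_bundle a b e : (e \in bundle a b) = joins src tgt e a b.
Proof. by rewrite inE. Qed.

Lemma share_endC e f : share_end src tgt e f = share_end src tgt f e.
Proof. by apply/existsP/existsP=> -[v /andP[ev fv]]; exists v; rewrite ev fv. Qed.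

Lemma share_end_joins e f a b :
  joins src tgt e a b -> share_end src tgt e f ->
  incident src tgt f a || incident src tgt f b.
Proof.
rewrite /joins /share_end /incident => jab /existsP[v /andP[ev fv]].
by case/orP: jab => /andP[/eqP ea /eqP eb]; case/orP: ev => /eqP ev;
  move: fv; rewrite -ev -?ea -?eb => ->; rewrite ?orbT.
Qed.

Lemma mem_colors_at D c f v :
  f \in D -> incident src tgt f v -> c f \in colors_at src tgt D c v.
Proof. by move=> fD fv; apply: imset_f; rewrite inE fD fv. Qed.

Lemma fresh_color_joins D c a b e f x :
  joins src tgt e a b -> f \in D -> share_end src tgt e f ->
  x \notin colors_at src tgt D c a :|: colors_at src tgt D c b -> x != c f.
Proof.
move=> jab fD ef; apply: contra => /eqP->; rewrite inE.
by case/orP: (share_end_joins jab ef) => /(mem_colors_at c fD)->; rewrite ?orbT.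
Qed.

Lemma eq_proper_coloring_on D c c' :
  {in D, c =1 c'} -> proper_coloring_on src tgt D c ->
  proper_coloring_on src tgt D c'.
Proof. by move=> eq_c pc e f eD fD; rewrite -!eq_c //; apply: pc. Qed.

Lemma proper_coloring_on_inj D c :
  {in D &, injective c} -> proper_coloring_on src tgt D c.
Proof.
by move=> inj_c e f eD fD neq_ef _; apply: contra neq_ef => /eqP/inj_c->.
Qed.

Lemma proper_coloring_onU D1 D2 c :
  proper_coloring_on src tgt D1 c -> proper_coloring_on src tgt D2 c ->
  {in D1 & D2, forall e f, share_end src tgt e f -> c e != c f} ->
  proper_coloring_on src tgt (D1 :|: D2) c.
Proof.
move=> pc1 pc2 cross e f; rewrite !inE.
case/orP=> [eD1|eD2]; case/orP=> [fD1|fD2] neq_ef ef.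
- exact: pc1.
- exact: cross.
- by rewrite eq_sym; apply: cross; rewrite // share_endC.
- exact: pc2.
Qed.


Lemma extend_proper_coloring_bundles D a b1 b2 kappa c1 c2 (Z1 Z2 : {set 'I_k}) :
  D = ~: (bundle a b1 :|: bundle a b2) ->
  proper_coloring_on src tgt D kappa ->
  Z1 \subset ~: (colors_at src tgt D kappa a :|: colors_at src tgt D kappa b1) ->
  Z2 \subset ~: (colors_at src tgt D kappa a :|: colors_at src tgt D kappa b2) ->
  [disjoint Z1 & Z2] ->
  {in bundle a b1 &, injective c1} -> {in bundle a b1, forall e, c1 e \in Z1} ->
  {in bundle a b2 &, injective c2} -> {in bundle a b2, forall e, c2 e \in Z2} ->
  proper_coloring_on src tgt [set: E] (fun e =>
    if e \in bundle a b1 then c1 e else if e \in bundle a b2 then c2 e else kappa e).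
Proof.
set J1 := bundle a b1; set J2 := bundle a b2.
move=> DE pk sZ1 sZ2 dZ inj1 Zc1 inj2 Zc2.
have kappaD e : e \in D -> e \notin J1 /\ e \notin J2.
  by rewrite DE !inE negb_or => /andP.
have -> : [set: E] = D :|: (J1 :|: J2) by rewrite DE setUC setUCr.
apply: proper_coloring_onU.
- by apply: eq_proper_coloring_on pk => e /kappaD[/negbTE-> /negbTE->].
- apply: (@eq_proper_coloring_on _ (fun e => if e \in J1 then c1 e else c2 e)).
    by move=> e; rewrite inE; case: (e \in J1) => //= ->.
  exact/proper_coloring_on_inj/(glue_inj_in inj1 inj2 Zc1 Zc2 dZ).
- move=> e f eD fJ fe; have [/negbTE-> /negbTE->] := kappaD e eD.
  rewrite eq_sym share_endC in fe *.
  have fresh b (Z : {set 'I_k}) x : f \in bundle a b ->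
      Z \subset ~: (colors_at src tgt D kappa a :|: colors_at src tgt D kappa b) ->
      x \in Z -> x != kappa e.
    rewrite mem_bundle => fb sZ xZ.
    by apply: (fresh_color_joins fb eD fe); rewrite -in_setC (subsetP sZ).
  case: ifP => [fJ1|fJ1]; first exact: fresh fJ1 sZ1 (Zc1 _ fJ1).
  have fJ2 : f \in J2 by move: fJ; rewrite inE fJ1.
  by rewrite fJ2; apply: fresh fJ2 sZ2 (Zc2 _ fJ2).
Qed.

End Multigraph.

Theorem lemma4 (k : nat) (V E : finType) (src tgt : E -> V)
  (loopless : forall e, src e != tgt e)
  (u0 u1 u2 : V)
  (nb1 : exists e, joins src tgt e u0 u1)
  (nb2 : exists e, joins src tgt e u0 u2)
  (u12 : u1 != u2)
  (kappa : E -> 'I_k) :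
  let DH := [set e | ~~ joins src tgt e u0 u1 && ~~ joins src tgt e u0 u2] in
  proper_coloring_on src tgt DH kappa ->
  let m1 := mult src tgt u0 u1 in
  let m2 := mult src tgt u0 u2 in
  let S0 := colors_at src tgt DH kappa u0 in
  let S1 := colors_at src tgt DH kappa u1 in
  let S2 := colors_at src tgt DH kappa u2 in
  m1 + #|S0 :|: S1| <= k ->
  m2 + #|S0 :|: S2| <= k ->
  m1 + m2 + #|S0 :|: (S1 :&: S2)| <= k ->
  exists kappa' : E -> 'I_k,
    proper_coloring_on src tgt [set: E] kappa' /\
    (forall e, e \in DH -> kappa' e = kappa e).
Proof.
move=> DH proper_kappa m1 m2 S0 S1 S2 le1 le2 le12.
pose J1 := bundle src tgt u0 u1; pose J2 := bundle src tgt u0 u2.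
have DHE : DH = ~: (J1 :|: J2) by apply/setP=> e; rewrite !inE negb_or.
have card_setC (A : {set 'I_k}) : #|~: A| = k - #|A|.
  by have := cardsC A; rewrite card_ord; lia.
have [||| Z1 [Z2 [sZ1 sZ2 dZ cZ1 cZ2]]] :=
  @disjoint_subsets_of_card _ (~: (S0 :|: S1)) (~: (S0 :|: S2)) m1 m2.
- by rewrite card_setC; lia.
- by rewrite card_setC; lia.
- by rewrite -setCI -setUIr card_setC; lia.
have [c1 [inj_c1 Zc1]] := @exists_inj_into _ _ J1 Z1 kappa cZ1.
have [c2 [inj_c2 Zc2]] := @exists_inj_into _ _ J2 Z2 kappa cZ2.
exists (fun e => if e \in J1 then c1 e else if e \in J2 then c2 e else kappa e).
split; first exact: extend_proper_coloring_bundles DHE proper_kappa sZ1 sZ2 dZ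
  inj_c1 Zc1 inj_c2 Zc2.
by move=> e; rewrite DHE !inE negb_or => /andP[/negbTE-> /negbTE->].
Qed.
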